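(* Let $\mathcal V$ be a congruence modular variety with Day terms $m_0,\dots,m_k$, $\mathbb A\in\mathcal V$, $n\ge 2$, and $R\le\mathbb A^{2^n}$ an $(n)$-dimensional tolerance of $\mathbb A$. Let $\gamma\in R$ and let $d\in\mathbb D_n$ be a sequence of length $i\in n$. Then (1) $\gamma^d\in R$, and (2) for every $f\in 2^{n\setminus\{i\}}$ such that $f(j)=0$ for some $j<i$, the $(i)$-cross-section line of $\gamma^d$ at $f$ is a constant pair (a pair $(a,a)$).
   Context: Cube notation. $n=\{0,\dots,n-1\}$, $2=\{0,1\}$; $2^n$ is the set of functions $n\to 2$. An $(n)$-cube over $A$ is $\gamma=(\gamma_f)_{f\in2^n}\in A^{2^n}$. For $i\in n$, $j\in 2$: $\mathrm{face}_i^j(\gamma)$ is $g\mapsto\gamma_{g\cup\{(i,j)\}}$; $\mathrm{glue}_{\{i\}}(\zeta,\eta)$ is the unique cube with $\mathrm{face}_i^0=\zeta$, $\mathrm{face}_i^1=\eta$; $\mathrm{refl}_i^j(\gamma)=\mathrm{glue}_{\{i\}}(\mathrm{face}_i^j\gamma,\mathrm{face}_i^j\gamma)$; $\mathrm{sym}_i(\gamma)=\mathrm{glue}_{\{i\}}(\mathrm{face}_i^1\gamma,\mathrm{face}_i^0\gamma)$. For $f\in 2^{n\setminus\{i\}}$ the $(i)$-cross-section line of $\gamma$ at $f$ is the pair $(\gamma_{f\cup\{(i,0)\}},\gamma_{f\cup\{(i,1)\}})$. A subuniverse $R$ of $\mathbb A^{2^n}$ is an $(n)$-dimensional tolerance if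 $\mathrm{refl}_i^j(\gamma),\mathrm{sym}_i(\gamma)\in R$ for all $\gamma\in R$, $i,j$. Day terms: $4$-ary terms $m_0,\dots,m_k$ with $m_0(x,y,z,w)\approx x$, $m_k(x,y,z,w)\approx w$, $m_e(x,y,y,x)\approx x$ for all $e$, $m_e(x,x,w,w)\approx m_{e+1}(x,x,w,w)$ for even $e<k$, $m_e(x,y,y,w)\approx m_{e+1}(x,y,y,w)$ for odd $e<k$; a variety is modular iff it has Day terms. Shift rotation: for $e\in\{0,\dots,k\}$ and $i\neq j\in n$, $\mathrm{rot}^e_{i,j}(\gamma)=m_e\big(\mathrm{refl}_j^1(\gamma),\gamma,\mathrm{refl}_i^0(\gamma),\mathrm{refl}_j^1(\mathrm{refl}_i^0(\gamma))\big)$ (coordinatewise). Tree. $\mathbb D_n$ is the set of finite sequences of elements of $\{0,\dots,k\}$ of length less than $n$ (including the empty sequence $\emptyset$), ordered by extension. For $\gamma\in A^{2^n}$ set $\gamma^\emptyset=\gamma$ and, for a nonempty $d=(d_0,\dots,d_i)\in\mathbb D_n$ with predecessor $c=(d_0,\dots,d_{i-1})$, $\gamma^d=\mathrm{rot}^{d_i}_{i,i+1}(\gamma^c)$. *)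

From mathcomp Require Import all_boot.
Set Implicit Arguments. Unset Strict Implicit. Unset Printing Implicit Defensive.

Record signature := Signature { op_sym : Type; arity : op_sym -> nat }.

Definition algebra (S : signature) (A : Type) :=
  forall o : op_sym S, ('I_(arity o) -> A) -> A.

Inductive term (S : signature) (X : Type) : Type :=
| Var : X -> term S X
| App : forall o : op_sym S, ('I_(arity o) -> term S X) -> term S X.

Fixpoint eval (S : signature) (A : Type) (ops : algebra S A) (X : Type)
    (v : X -> A) (t : term S X) : A :=
  match t with
  | Var x => v x
  | App o args => ops o (fun j => eval ops v (args j))
  end.

Definition eval4 (S : signature) (A : Type) (ops : algebra S A)
    (t : term S 'I_4) (x y z w : A) : A :=
  eval ops (fun i : 'I_4 => nth x [:: x; y; z; w] i) t.

Definition day_terms (S : signature) (A : Type) (ops : algebra S A)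
    (k : nat) (m : nat -> term S 'I_4) : Prop :=
  [/\ (forall x y z w, eval4 ops (m 0) x y z w = x),
      (forall x y z w, eval4 ops (m k) x y z w = w),
      (forall e, e <= k -> forall x y, eval4 ops (m e) x y y x = x),
      (forall e, e < k -> ~~ odd e ->
         forall x w, eval4 ops (m e) x x w w = eval4 ops (m e.+1) x x w w) &
      (forall e, e < k -> odd e ->
         forall x y w, eval4 ops (m e) x y y w = eval4 ops (m e.+1) x y y w)].

Definition vertex (n : nat) := {ffun 'I_n -> bool}.
Definition cube (n : nat) (A : Type) := {ffun vertex n -> A}.

(** [upd f i b] = f with coordinate i set to b, i.e. (f restricted to
    n \ {i}) ∪ {(i,b)}. *)
Definition upd (n : nat) (f : vertex n) (i : nat) (b : bool) : vertex n :=
  [ffun x : 'I_n => if nat_of_ord x == i then b else f x].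

Definition refl (n : nat) (A : Type) (i : nat) (j : bool) (g : cube n A)
  : cube n A := [ffun f => g (upd f i j)].

Definition symm (n : nat) (A : Type) (i : nat) (g : cube n A) : cube n A :=
  [ffun f : vertex n =>
     g [ffun x : 'I_n => if nat_of_ord x == i then ~~ f x else f x]].

Definition subuniverse (S : signature) (A : Type) (ops : algebra S A) (n : nat)
    (R : cube n A -> Prop) : Prop :=
  forall (o : op_sym S) (args : 'I_(arity o) -> cube n A),
    (forall j, R (args j)) -> R [ffun f => ops o (fun j => args j f)].

Definition tolerance (S : signature) (A : Type) (ops : algebra S A) (n : nat)
    (R : cube n A -> Prop) : Prop :=
  [/\ subuniverse ops R,
      (forall i, i < n -> forall j g, R g -> R (refl i j g)) &
      (forall i, i < n -> forall g, R g -> R (symm i g))].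

Definition rot (S : signature) (A : Type) (ops : algebra S A)
    (m : nat -> term S 'I_4) (n : nat) (e i j : nat) (g : cube n A) : cube n A :=
  [ffun f => eval4 ops (m e) (refl j true g f) (g f) (refl i false g f)
                             (refl j true (refl i false g) f)].

Fixpoint tree_aux (S : signature) (A : Type) (ops : algebra S A)
    (m : nat -> term S 'I_4) (n : nat) (g : cube n A) (d : seq nat) (p : nat)
  : cube n A :=
  match d with
  | [::] => g
  | e :: d' => tree_aux ops m (rot ops m e p p.+1 g) d' p.+1
  end.

Definition tree_cube (S : signature) (A : Type) (ops : algebra S A)
    (m : nat -> term S 'I_4) (n : nat) (g : cube n A) (d : seq nat) : cube n A :=
  tree_aux ops m g d 0.

Definition in_tree (k n : nat) (d : seq nat) : bool :=
  (size d < n) && all (fun e => e <= k) d.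

From Pilot Require Import Defs.
From Stdlib Require Import FunctionalExtensionality.
From mathcomp Require Import all_boot.

(* The proof is an induction on d read from the right: γ^(c·e) is
   rot^e_{p,p+1}(γ^c) with p = |c|.
   - Membership: R is a subuniverse, hence closed under coordinatewise term
     operations, and it is closed under reflections; rot is a term operation
     applied to γ^c and reflections of it.
   - Constancy: if a cube D "absorbs" the reflection refl_p^0 along a line
     (D(h[p:=0]) = D(h)), the Day identity m_e(x,y,y,x) = x makes
     rot^e_{p,p+1}(D) constant on the (p+1)-line ([rot_line_const]); and the
     induction hypothesis (constancy of γ^c on p-lines) yields exactly this
     absorption at every vertex with a 0 among its first p+1 coordinates
     ([const_lines_absorb]). *)

Definition const_lines {n : nat} {A : Type} (D : cube n A) (i : nat) : Prop :=
  forall f : vertex n, (exists j : 'I_n, j < i /\ f j = false) ->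
    D (upd f i false) = D (upd f i true).

Section Vertices.
Variable n : nat.

Lemma updE (f : vertex n) i b (x : 'I_n) :
  upd f i b x = if nat_of_ord x == i then b else f x.
Proof. by rewrite ffunE. Qed.

Lemma upd_upd (f : vertex n) i b c : upd (upd f i b) i c = upd f i c.
Proof. by apply/ffunP => x; rewrite !updE; case: eqP. Qed.

Lemma upd_id (f : vertex n) (o : 'I_n) b : f o = b -> upd f o b = f.
Proof.
move=> fob; apply/ffunP => x; rewrite updE; case: eqP => // /val_inj ->.
by rewrite fob.
Qed.

End Vertices.

Section TermClosure.
Variables (S : signature) (A : Type) (ops : algebra S A) (n : nat).
Variable R : cube n A -> Prop.
Hypothesis subR : subuniverse ops R.

Lemma subuniverse_eval (X : Type) (t : term S X) (v : vertex n -> X -> A) :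
  (forall x, R [ffun f => v f x]) -> R [ffun f => eval ops (v f) t].
Proof.
move=> Rv; elim: t => [x|o args IH] /=; first exact: Rv.
have := subR o (fun j => [ffun f => eval ops (v f) (args j)]) IH.
congr R; apply/ffunP => f; rewrite !ffunE; congr (ops o _).
by apply: functional_extensionality => j; rewrite ffunE.
Qed.

Lemma subuniverse_eval4 (t : term S 'I_4) (a b c d : cube n A) :
  R a -> R b -> R c -> R d ->
  R [ffun f => eval4 ops t (a f) (b f) (c f) (d f)].
Proof.
move=> Ra Rb Rc Rd.
apply: (subuniverse_eval _ t (fun f (i : 'I_4) =>
                              nth (a f) [:: a f; b f; c f; d f] i)).
by case=> [[|[|[|[|i]]]] lt_i4] //=;
  [move: Ra | move: Rb | move: Rc | move: Rd]; congr R; apply/ffunP => f;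
  rewrite ffunE.
Qed.

End TermClosure.

(* The shift rotation is written [Defs.rot] to avoid the sequence rotation
   [rot] of the seq library. *)
Section Rotation.
Variables (S : signature) (A : Type) (ops : algebra S A).
Variables (m : nat -> term S 'I_4) (n : nat).

Lemma rot_closed (R : cube n A -> Prop) e i j (D : cube n A) :
  tolerance ops R -> i < n -> j < n -> R D -> R (Defs.rot ops m e i j D).
Proof.
move=> [subR reflR _] lt_in lt_jn RD.
have reflRD b (l : nat) : l < n -> R (refl l b D) by move=> lt_ln; apply: reflR.
apply: subuniverse_eval4 => //; try exact: reflRD.
by apply: (reflR) => //; apply: reflRD.
Qed.

Lemma rot_line_const e i j (D : cube n A) (f : vertex n) :
  (forall x y, eval4 ops (m e) x y y x = x) ->
  (forall b, D (upd (upd f j b) i false) = D (upd f j b)) ->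
  Defs.rot ops m e i j D (upd f j false) = Defs.rot ops m e i j D (upd f j true).
Proof.
move=> day absorb.
by rewrite /Defs.rot !ffunE /refl !upd_upd !absorb !day.
Qed.

(* Constancy of D on p-lines gives absorption of refl_p^0 at every vertex with
   a 0 among its first p+1 coordinates: either the p-th coordinate is already
   0, or the 0 lies strictly before p. *)
Lemma const_lines_absorb (D : cube n A) p (h : vertex n) :
  p < n -> const_lines D p ->
  (exists j : 'I_n, j <= p /\ h j = false) ->
  D (upd h p false) = D h.
Proof.
move=> lt_pn constD [j [le_jp hj]].
pose o : 'I_n := Ordinal lt_pn.
case ho: (h o); last by rewrite (@upd_id _ h o).
have lt_jp : j < p.
  rewrite ltn_neqAle le_jp andbT; apply: contraNneq (negbT hj) => jp.
  by rewrite (_ : j = o) //; apply: val_inj.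
by rewrite constD; [rewrite (@upd_id _ h o) | exists j].
Qed.

Lemma rot_step (R : cube n A -> Prop) e p (D : cube n A) :
  tolerance ops R -> (forall x y, eval4 ops (m e) x y y x = x) ->
  p.+1 < n -> R D -> const_lines D p ->
  R (Defs.rot ops m e p p.+1 D) /\ const_lines (Defs.rot ops m e p p.+1 D) p.+1.
Proof.
move=> tolR day lt_p1n RD constD.
split; first exact: rot_closed (ltnW lt_p1n) lt_p1n RD.
move=> f [j [lt_jp1 fj]]; apply: rot_line_const => // b.
apply: const_lines_absorb (ltnW lt_p1n) constD _.
by exists j; split; rewrite // updE ltn_eqF.
Qed.

Lemma tree_aux_rcons (g : cube n A) c e q :
  tree_aux ops m g (rcons c e) q =
  Defs.rot ops m e (q + size c) (q + size c).+1 (tree_aux ops m g c q).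
Proof.
elim: c g q => [|a c IH] g q /=; first by rewrite addn0.
by rewrite IH addSnnS.
Qed.

End Rotation.

Theorem lemma2p4 (S : signature) (A : Type) (ops : algebra S A)
    (k : nat) (m : nat -> term S 'I_4) (n : nat) (R : cube n A -> Prop)
    (g : cube n A) (d : seq nat) :
  day_terms ops k m ->
  2 <= n ->
  tolerance ops R ->
  R g ->
  in_tree k n d ->
  R (tree_cube ops m g d) /\
  (forall f : vertex n,
     (exists j : 'I_n, j < size d /\ f j = false) ->
     tree_cube ops m g d (upd f (size d) false)
     = tree_cube ops m g d (upd f (size d) true)).
Proof.
move=> [_ _ day _ _] _ tolR Rg.
elim/last_ind: d => [_|c e IH]; first by split => // f [j []].
rewrite /in_tree size_rcons all_rcons => /andP [lt_c1n /andP [le_ek all_c]].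
have [Rc constc] : R (tree_cube ops m g c) /\ const_lines (tree_cube ops m g c) (size c).
  by apply: IH; rewrite /in_tree all_c andbT ltnW.
rewrite /tree_cube tree_aux_rcons add0n.
exact: rot_step (day e le_ek) lt_c1n Rc constc.
Qed.
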